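(* For all integers $n\ge0$ and $p\ge0$, $$\mathcal{B}_{n,p}=\sum_{k\ge0}\binom{p+k}{k}^{-1}{}_1F_1(k+1;p+k+1;-1)\frac{k^n}{k!},$$ with the convention $0^0=1$.
   Context: ${}_1F_1(a;c;w)=\sum_{n\ge0}\frac{a^{\overline n}}{c^{\overline n}}\frac{w^n}{n!}$ is Kummer's confluent hypergeometric function, where $a^{\overline n}=a(a+1)\cdots(a+n-1)$. For an integer $p\ge0$, the $p$-Bell numbers $\mathcal{B}_{n,p}$ are defined by $\sum_{n\ge0}\mathcal{B}_{n,p}\frac{z^n}{n!}=\sum_{n\ge0}\binom{n+p}{p}^{-1}\frac{(e^z-1)^n}{n!}$. *)

From mathcomp Require Import all_boot all_order all_algebra.
From mathcomp Require Import all_classical all_reals all_analysis.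
Set Implicit Arguments. Unset Strict Implicit. Unset Printing Implicit Defensive.
Import Order.TTheory GRing.Theory Num.Theory.
Import numFieldNormedType.Exports.
Local Open Scope ring_scope.

Definition rising {R : pzRingType} (a : R) (n : nat) : R :=
  \prod_(i < n) (a + i%:R).

Definition hyp1F1 {R : realType} (a c w : R) : R :=
  let u : R^nat := fun n => rising a n / rising c n * w ^+ n / (n`!)%:R in
  limn (series u).

Definition expm1_trunc {R : realType} (n : nat) : {poly R} :=
  \sum_(1 <= j < n.+1) ((j`!)%:R)^-1 *: 'X^j.

(* p-Bell numbers: B_{n,p} = n! [z^n] sum_k C(k+p,p)^{-1} (e^z-1)^k/k!,
   computed as formal power series coefficient extraction.  Since e^z-1 has
   no constant term, only k <= n and the terms of degree <= n of e^z-1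
   contribute to [z^n], so the truncation below is exact. *)
Definition pBell {R : realType} (n p : nat) : R :=
  (n`!)%:R * (\sum_(k < n.+1)
     ((('C(k + p, p))%:R)^-1 / (k`!)%:R) *: (expm1_trunc n) ^+ k)`_n.

From mathcomp Require Import all_boot all_order all_algebra.
From mathcomp Require Import all_classical all_reals all_analysis.
From mathcomp Require Import ring.
Set Implicit Arguments.
Unset Strict Implicit.
Import Order.TTheory GRing.Theory Num.Theory.
Import numFieldNormedType.Exports.
Local Open Scope classical_set_scope.
Local Open Scope ring_scope.

(* Expanding (e^z - 1)^s by the binomial theorem gives Stirling's formula
   n! [z^n] (e^z - 1)^s / s! = sum_(i + m = s) (i^n / i!) ((-1)^m / m!),
   which vanishes for s > n; hence B_(n,p) = sum_s d_s sum_(i + m = s) a_i b_m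
   with a_i = i^n/i!, b_m = (-1)^m/m! and d_s = C(s+p,p)^-1.  Summing over i
   first instead gives sum_i a_i sum_m b_m d_(i+m), and the inner series is
   C(p+i,i)^-1 1F1(i+1; p+i+1; -1).  The two orders of summation agree in the
   limit because the tails of sum_m b_m d_(i+m) are bounded by 2/M!, so the
   K-th partial sums differ by at most 2 K^n 2^K / K!. *)

Lemma natr_fact_neq0 {R : numDomainType} k : k`!%:R != 0 :> R.
Proof. by rewrite pnatr_eq0 -lt0n fact_gt0. Qed.

Lemma natr_bin_addl_neq0 {R : numDomainType} j p : 'C(j + p, p)%:R != 0 :> R.
Proof. by rewrite pnatr_eq0 -lt0n bin_gt0 leq_addl. Qed.

Lemma norm_invr_bin_addl_le1 {R : numFieldType} j p :
  `|('C(j + p, p)%:R : R)^-1| <= 1.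
Proof. by rewrite ger0_norm ?invr_ge0 // invf_le1 ?ler1n ?ltr0n bin_gt0 leq_addl. Qed.

Lemma natr_binE {R : numFieldType} k j : (j <= k)%N ->
  'C(k, j)%:R = k`!%:R / (j`!%:R * (k - j)`!%:R) :> R.
Proof.
by move=> le_jk; rewrite -(bin_fact le_jk) !natrM mulfK // mulf_neq0 ?natr_fact_neq0.
Qed.

Lemma rising_natSE {R : numFieldType} j m :
  rising (j.+1)%:R m = (j + m)`!%:R / j`!%:R :> R.
Proof.
elim: m => [|m IHm]; first by rewrite /rising big_ord0 addn0 divff ?natr_fact_neq0.
rewrite /rising big_ord_recr -/(rising _ _) IHm /= addnS factS natrM -natrD addSn.
by field; rewrite natr_fact_neq0.
Qed.

Lemma norm_sign_div_fact_le {R : numFieldType} m (c : R) : `|c| <= 1 ->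
  `|(-1) ^+ m / m`!%:R * c| <= (m`!%:R)^-1.
Proof.
move=> c_le1; rewrite normrM normrM normrX normrN1 expr1n mul1r normfV normr_nat.
by rewrite -[X in _ <= X]mulr1 ler_wpM2l ?invr_ge0.
Qed.

Definition exp_trunc (R : numFieldType) (N : nat) : {poly R} :=
  \poly_(j < N.+1) (j`!%:R)^-1.

Lemma coef_exp_trunc_pow (R : numFieldType) N i a : (a <= N)%N ->
  (exp_trunc R N ^+ i)`_a = i%:R ^+ a / a`!%:R.
Proof.
elim: i a => [|i IHi] a le_aN.
  by rewrite expr0 coef1; case: a le_aN => [|a] _; rewrite ?fact0 ?divr1 // expr0n mul0r.
rewrite exprSr coefM -natr1 exprD1n mulr_suml; apply: eq_bigr => -[j /=] lt_ja _.
have le_ja : (j <= a)%N by rewrite -ltnS.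
rewrite IHi ?(leq_trans le_ja) // coef_poly ltnS (leq_trans (leq_subr _ _) le_aN).
rewrite -[_ *+ 'C(a, j)]mulr_natr natr_binE //.
by field; rewrite !natr_fact_neq0.
Qed.

Definition stirling2 (R : numFieldType) (n s : nat) : R :=
  \sum_(i < s.+1) i%:R ^+ n / i`!%:R * ((-1) ^+ (s - i) / (s - i)`!%:R).

Section TruncatedExpm1.
Variable R : realType.

Lemma expm1_truncE N : expm1_trunc N = exp_trunc R N - 1.
Proof.
rewrite /expm1_trunc /exp_trunc poly_def big_ord_recl /= fact0 invr1 expr0 scale1r.
by rewrite addrC addKr big_add1 big_mkord.
Qed.

Lemma coef_expm1_trunc_pow N s a : (a <= N)%N ->
  (expm1_trunc N ^+ s)`_a = s`!%:R / a`!%:R * stirling2 R a s.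
Proof.
move=> le_aN; rewrite expm1_truncE addrC exprDn coef_sum mulr_sumr.
apply: eq_bigr => -[i /=] lt_is _.
rewrite coefMn -(rmorphN1 polyC) -rmorphXn coefCM coef_exp_trunc_pow //.
rewrite -[_ *+ 'C(s, i)]mulr_natr natr_binE //.
by field; rewrite !natr_fact_neq0.
Qed.

Lemma coef_expm1_trunc_pow_small N s a : (a < s)%N ->
  (expm1_trunc N ^+ s)`_a = 0 :> R.
Proof.
have -> : expm1_trunc (R := R) N = 'X * \sum_(j < N) (j.+1`!%:R)^-1 *: 'X^j.
  rewrite /expm1_trunc big_add1 big_mkord mulr_sumr; apply: eq_bigr => j _.
  by rewrite exprS scalerAr.
by move=> lt_as; rewrite exprMn coefXnM lt_as.
Qed.

Lemma stirling2_eq0 n s : (n < s)%N -> stirling2 R n s = 0.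
Proof.
move=> lt_ns; have := coef_expm1_trunc_pow s (leqnn n).
rewrite coef_expm1_trunc_pow_small // => /esym /eqP.
by rewrite !mulf_eq0 invr_eq0 !(negPf (natr_fact_neq0 _)) => /eqP.
Qed.

Lemma pBell_stirling2 n p :
  pBell n p = \sum_(k < n.+1) ('C(k + p, p)%:R)^-1 * stirling2 R n k.
Proof.
rewrite /pBell coef_sum mulr_sumr; apply: eq_bigr => k _.
rewrite coefZ coef_expm1_trunc_pow //.
by field; rewrite natr_bin_addl_neq0 !natr_fact_neq0.
Qed.

End TruncatedExpm1.

Lemma sum_convolution_exchange (R : comPzSemiRingType) (a b d : nat -> R) K :
  \sum_(0 <= i < K) a i * \sum_(0 <= m < K - i) b m * d (i + m)%N =
  \sum_(0 <= s < K) d s * \sum_(i < s.+1) a i * b (s - i)%N.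
Proof.
pose f i s := a i * b (s - i)%N * d s.
transitivity (\sum_(0 <= i < K) \sum_(i <= s < K) f i s).
  apply: eq_bigr => i _; rewrite (big_addn 0 K i) mulr_sumr.
  by apply: eq_bigr => m _; rewrite /f addnK addnC mulrA.
under eq_bigr => i _ do rewrite (@big_nat_widenl _ _ _ i 0) //.
rewrite (exchange_big_dep_nat predT) //; apply: eq_big_nat => s /andP[_ lt_sK].
rewrite -(big_mkord xpredT (fun i => a i * b (s - i)%N)).
rewrite (@big_nat_widen _ _ _ 0 s.+1 K) // mulr_sumr.
by apply: eq_big => [i | i _]; rewrite // /f mulrC.
Qed.

Lemma leq_bin_exp2 m k : ('C(m, k) <= 2 ^ m)%N.
Proof.
elim: m k => [|m IHm] [|k] //; first by rewrite bin0 expn_gt0.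
by rewrite binS expnS mul2n -addnn leq_add.
Qed.

Lemma leq_expn_fact_exp2 K n : (K ^ n <= n`! * 2 ^ (K + n))%N.
Proof.
have le_ffact : (K ^ n <= (K + n) ^_ n)%N.
  elim: n => [|n IHn] //; rewrite addnS ffactSS expnS leq_mul //.
  exact: leq_trans (leq_addr n K) (leqnSn _).
by rewrite (leq_trans le_ffact) // -bin_ffact mulnC leq_mul2l leq_bin_exp2 orbT.
Qed.

Lemma leq_sum_bin_mul_expn K n :
  (\sum_(0 <= i < K) 'C(K, i) * i ^ n <= K ^ n * 2 ^ K)%N.
Proof.
have sum_bin : (\sum_(i < K.+1) 'C(K, i) = 2 ^ K)%N.
  by rewrite -[2%N]/(1 + 1)%N expnDn; apply: eq_bigr => i _; rewrite !exp1n !muln1.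
rewrite -sum_bin big_distrr big_mkord big_ord_recr /= (leq_trans _ (leq_addr _ _)) //.
apply: leq_sum => i _; rewrite mulnC leq_mul2r; case: n => [|n]; first by rewrite orbT.
by rewrite leq_exp2r // ltnW ?orbT.
Qed.

Lemma cvg_natrX_exp_coeff {R : realType} n (x : R) :
  (fun K => K%:R ^+ n * exp_coeff x K) @ \oo --> 0.
Proof.
apply: norm_cvg0.
apply: (@squeeze_cvgr _ _ _ _ (cst 0)
  (fun K => n`!%:R * 2 ^+ n * exp_coeff (2 * `|x|) K)).
- near=> K; rewrite normr_ge0 /= /exp_coeff /= !normrM !normrX normfV !normr_nat exprMn.
  have -> : n`!%:R * 2 ^+ n * (2 ^+ K * `|x| ^+ K / K`!%:R) =
      (n`! * 2 ^ (K + n))%:R * (`|x| ^+ K / K`!%:R) :> R.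
    by rewrite natrM natrX exprD; ring.
  by rewrite ler_wpM2r ?divr_ge0 ?exprn_ge0 // -natrX ler_nat leq_expn_fact_exp2.
- exact: cvg_cst.
- by rewrite -(mulr0 (n`!%:R * 2 ^+ n)); apply: cvgMr; exact: cvg_exp_coeff.
Unshelve. all: by end_near.
Qed.

Lemma sum_natrX_div_fact_tail_le {R : realType} n K :
  \sum_(0 <= i < K) i%:R ^+ n / i`!%:R * (2 / (K - i)`!%:R)
    <= 2 * (K%:R ^+ n * exp_coeff 2 K) :> R.
Proof.
have termE i : (0 <= i < K)%N ->
    i%:R ^+ n / i`!%:R * (2 / (K - i)`!%:R) = 2 / K`!%:R * ('C(K, i) * i ^ n)%:R :> R.
  move=> /andP[_ /ltnW le_iK]; rewrite natrM natrX natr_binE //.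
  by field; rewrite !natr_fact_neq0.
rewrite (eq_big_nat _ _ termE) -mulr_sumr -natr_sum.
have -> : 2 * (K%:R ^+ n * exp_coeff 2 K) = 2 / K`!%:R * (K ^ n * 2 ^ K)%:R :> R.
  by rewrite /exp_coeff /= natrM !natrX; field; rewrite natr_fact_neq0.
by rewrite ler_wpM2l ?divr_ge0 // ler_nat leq_sum_bin_mul_expn.
Qed.

Lemma sum_inv_fact_tail_le {R : numFieldType} M N : (0 < M)%N -> (M <= N)%N ->
  \sum_(M <= m < N) (m`!%:R)^-1 + 2 / N`!%:R <= 2 / M`!%:R :> R.
Proof.
move=> M_gt0; elim: N => [|N IHN]; first by rewrite leqn0 => /eqP M0; rewrite M0 in M_gt0.
rewrite leq_eqVlt => /orP[/eqP <-|]; first by rewrite big_geq // add0r.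
rewrite ltnS => le_MN; rewrite big_nat_recr //= -addrA (le_trans _ (IHN le_MN)) //.
have le_2_SN : 2 / N.+1%:R <= 1 :> R.
  by rewrite ler_pdivrMr ?ltr0n // mul1r ler_nat ltnS (leq_trans M_gt0).
rewrite lerD2l factS natrM invfM mulrA -{1}[N`!%:R^-1]mul1r -mulrDl.
by rewrite ler_pM2r ?invr_gt0 ?ltr0n ?fact_gt0 // -[X in _ <= X]/(1 + 1) lerD2l.
Qed.

Section InvFactDominatedSeries.
Variables (R : realType) (w : R ^nat).
Hypothesis w_le : forall m, `|w m| <= (m`!%:R)^-1.

Lemma is_cvg_series_inv_fact_dominated : cvgn (series w).
Proof.
apply: normed_cvg; apply: (@series_le_cvg _ _ (exp_coeff 1)) => [m|m|m|].
- exact: normr_ge0.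
- exact: exp_coeff_ge0.
- by rewrite /exp_coeff /= expr1n mul1r.
- exact: is_cvg_series_exp_coeff.
Qed.

Lemma lim_series_inv_fact_dominated_tail M : (0 < M)%N ->
  `|limn (series w) - series w M| <= 2 / M`!%:R.
Proof.
move=> M_gt0.
have cvg_tail : `|series w N - series w M| @[N --> \oo] -->
    `|limn (series w) - series w M|.
  apply: cvg_norm; apply: cvgB; last exact: cvg_cst.
  exact: is_cvg_series_inv_fact_dominated.
apply: (cvgr_to_le cvg_tail); near=> N.
have le_MN : (M <= N)%N by near: N; exists M.
rewrite /series /= (@big_cat_nat _ _ _ M 0 N) //= addrAC subrr add0r.
apply: le_trans (ler_norm_sum _ _ _) _.
apply: le_trans (sum_inv_fact_tail_le M_gt0 le_MN); rewrite -[X in X <= _]addr0.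
by apply: lerD; [exact: ler_sum | rewrite divr_ge0].
Unshelve. all: by end_near.
Qed.

End InvFactDominatedSeries.

Section StirlingExchange.
Variables (R : realType) (n : nat) (d : R ^nat).
Hypothesis d_le1 : forall j, `|d j| <= 1.

Let F i : R := limn (series (fun m => (-1) ^+ m / m`!%:R * d (i + m)%N)).

Lemma series_exchange_error_le K :
  `|series (fun i => i%:R ^+ n / i`!%:R * F i) K -
    \sum_(0 <= s < K) d s * stirling2 R n s| <= 2 * (K%:R ^+ n * exp_coeff 2 K).
Proof.
rewrite /stirling2 -(sum_convolution_exchange (fun i => i%:R ^+ n / i`!%:R)
  (fun m => (-1) ^+ m / m`!%:R)) /series /= -sumrB.
rewrite (le_trans (ler_norm_sum _ _ _)) //.
rewrite (le_trans _ (sum_natrX_div_fact_tail_le n K)) //.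
apply: ler_sum_nat => i /andP[_ lt_iK].
have a_ge0 : 0 <= i%:R ^+ n / i`!%:R :> R by rewrite divr_ge0 ?exprn_ge0.
rewrite -mulrBr normrM ger0_norm // ler_wpM2l //.
apply: lim_series_inv_fact_dominated_tail; last by rewrite subn_gt0.
by move=> m; apply: norm_sign_div_fact_le.
Qed.

Lemma cvg_series_stirling2 :
  series (fun i => i%:R ^+ n / i`!%:R * F i) @ \oo -->
    \sum_(s < n.+1) d s * stirling2 R n s.
Proof.
apply/subr_cvg0; apply: norm_cvg0.
apply: (@squeeze_cvgr _ _ _ _ (cst 0) (fun K => 2 * (K%:R ^+ n * exp_coeff 2 K))).
- near=> K; rewrite normr_ge0 /=.
  have lt_nK : (n < K)%N by near: K; exists n.+1.
  have -> : \sum_(s < n.+1) d s * stirling2 R n s =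
      \sum_(0 <= s < K) d s * stirling2 R n s.
    rewrite (@big_cat_nat _ _ _ n.+1 0 K) //= [X in _ + X]big1_seq ?addr0 ?big_mkord //.
    move=> s /=; rewrite mem_index_iota => /andP[lt_ns _].
    by rewrite stirling2_eq0 ?mulr0.
  by have := series_exchange_error_le K.
- exact: cvg_cst.
- by rewrite -(mulr0 2); apply: cvgMr; exact: cvg_natrX_exp_coeff.
Unshelve. all: by end_near.
Qed.

End StirlingExchange.

Lemma bin_hyp1F1_seriesE (R : realType) p k :
  ('C(p + k, k)%:R)^-1 * hyp1F1 (k.+1%:R) ((p + k).+1%:R) (-1) =
  limn (series (fun m => (-1) ^+ m / m`!%:R * ('C(k + m + p, p)%:R : R)^-1)).
Proof.
set u := fun m => _; rewrite /hyp1F1 /=.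
have -> : (fun m => rising (k.+1%:R : R) m / rising ((p + k).+1%:R) m
                      * (-1) ^+ m / m`!%:R) = 'C(p + k, k)%:R *: u.
  apply/funext => m; rewrite -[RHS]/('C(p + k, k)%:R * u m) /u.
  rewrite !rising_natSE !natr_binE ?leq_addl ?leq_addr // !addnK.
  rewrite [(k + m + p)%N]addnC addnA.
  by field; rewrite !natr_fact_neq0.
rewrite lim_seriesZ ?mulKf ?natr_bin_addl_neq0 //.
apply: is_cvg_series_inv_fact_dominated => m.
exact/norm_sign_div_fact_le/norm_invr_bin_addl_le1.
Qed.

Theorem mainTheorem20 (R : realType) (n p : nat) :
  series (fun k : nat =>
    ((('C(p + k, k))%:R)^-1 * hyp1F1 (k.+1%:R) ((p + k).+1%:R) (-1)
      * ((k%:R : R) ^+ n) / (k`!)%:R)) @ \oo --> (pBell n p : R).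
Proof.
have -> : (fun k : nat => ('C(p + k, k)%:R)^-1 * hyp1F1 (k.+1%:R) ((p + k).+1%:R) (-1)
      * (k%:R : R) ^+ n / k`!%:R) =
    (fun k => k%:R ^+ n / k`!%:R *
      limn (series (fun m => (-1) ^+ m / m`!%:R * ('C(k + m + p, p)%:R : R)^-1))).
  by apply/funext => k; rewrite -bin_hyp1F1_seriesE; ring.
rewrite pBell_stirling2.
apply: (@cvg_series_stirling2 R n (fun j => ('C(j + p, p)%:R)^-1)) => j.
exact: norm_invr_bin_addl_le1.
Qed.
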